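(* Let $r\ge1$ and let $k_1,\dots,k_{r+1}$ be positive integers. Then in $\mathfrak{H}^1[[t]]$, $$\widehat{\phi}\bigl((z_{k_1}ш\cdotsш z_{k_r})x^{k_{r+1}}\bigr)=(z_{k_1}ш\cdotsш z_{k_r})x^{k_{r+1}}+\sum_{i=1}^r(-1)^{k_i+k_{r+1}}\sum_{l,l'\ge0}\binom{k_i+l-1}{l}\binom{k_{r+1}+l'-1}{l'}\bigl(z_{k_1}ш\cdotsш\check{z}_{k_i}ш\cdotsш z_{k_r}ш z_{k_{r+1}+l'}\bigr)x^{k_i+l}\,t^{l+l'},$$ where $\check{z}_{k_i}$ means the factor $z_{k_i}$ is omitted.
   Context: $\mathfrak{H}=\mathbb{Q}\langle x,y\rangle$, $\mathfrak{H}^1=\mathbb{Q}+y\mathfrak{H}$, $z_k=yx^{k-1}$, $z_{\boldsymbol{k}}=z_{k_1}\cdots z_{k_r}$, $z_\varnothing=1$. The shuffle product $ш$ on $\mathfrak{H}$ is the $\mathbb{Q}$-bilinear map with $aш1=1шa=a$ and $(a_1u_1)ш(a_2u_2)=(a_1ш a_2u_2)u_1+(a_1u_1ш a_2)u_2$ for $a_1,a_2\in\mathfrak{H}$, $u_1,u_2\in\{x,y\}$, extended $\mathbb{Q}[[t]]$-bilinearly. For tuples $\boldsymbol{k}=(k_1,\dots,k_r)$, $\boldsymbol{l}=(l_1,\dots,l_r)$ of nonnegative integers: $\mathrm{wt}(\boldsymbol{k})=\sum k_i$, $\overline{\boldsymbol{k}}=(k_r,\dots,k_1)$, $\boldsymbol{k}+\boldsymbol{l}=(k_1+l_1,\dots,k_r+l_r)$,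 $b\binom{\boldsymbol{k}}{\boldsymbol{l}}=\prod_i\binom{k_i+l_i-1}{l_i}$ with $\binom{l-1}{l}=\delta_{l,0}$, $\boldsymbol{k}_{[i]}=(k_1,\dots,k_i)$, $\boldsymbol{k}^{[i]}=(k_{i+1},\dots,k_r)$. The $t$-adic symmetrization map is the $\mathbb{Q}[[t]]$-linear map $\widehat{\phi}:\mathfrak{H}^1[[t]]\to\mathfrak{H}^1[[t]]$ defined on an index $\boldsymbol{k}$ of depth $r$ by $$\widehat{\phi}(z_{\boldsymbol{k}})=\sum_{i=0}^r(-1)^{\mathrm{wt}(\boldsymbol{k}^{[i]})}z_{\boldsymbol{k}_{[i]}}\,ш\sum_{\boldsymbol{l}\in\mathbb{Z}_{\ge0}^{r-i}}b\binom{\boldsymbol{k}^{[i]}}{\boldsymbol{l}}z_{\overline{\boldsymbol{k}^{[i]}+\boldsymbol{l}}}\,t^{\mathrm{wt}(\boldsymbol{l})}.$$ *)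

From mathcomp Require Import all_boot all_order all_algebra.
Set Implicit Arguments. Unset Strict Implicit. Unset Printing Implicit Defensive.
Import Order.TTheory GRing.Theory Num.Theory.
Local Open Scope ring_scope.

Definition word := seq bool.
Definition xL : bool := false.
Definition yL : bool := true.

Definition zl (k : nat) : word := yL :: nseq k.-1 xL.
Definition zw (ks : seq nat) : word := flatten (map zl ks).

(* Elements of H = Q<x,y> are represented as formal finite Q-linear
   combinations of words; two formal sums denote the same element iff
   their coefficient functions [coef] agree. *)
Definition fsum := seq (rat * word).
Definition coef (p : fsum) (w : word) : rat :=
  \sum_(cw <- p | cw.2 == w) cw.1.
Definition fs_word (w : word) : fsum := [:: (1, w)].
Definition fs_scale (c : rat) (p : fsum) : fsum :=
  [seq (c * cw.1, cw.2) | cw <- p].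
Definition fs_rcat (p : fsum) (u : word) : fsum :=
  [seq (cw.1, cw.2 ++ u) | cw <- p].

(* Shuffle of words, following the recursive definition
   (a1 u1) ш (a2 u2) = (a1 ш a2 u2) u1 + (a1 u1 ш a2) u2,
   computed on reversed words (the last letter becomes the head).
   The result is the multiset of words of the shuffle (coefficient 1 each). *)
Fixpoint shr (a b : word) : seq word :=
  match a with
  | [::] => [:: b]
  | u1 :: a1 =>
      let fix shr_b (b : word) : seq word :=
        match b with
        | [::] => [:: a]
        | u2 :: b1 => map (cons u1) (shr a1 (u2 :: b1)) ++ map (cons u2) (shr_b b1)
        end in shr_b b
  end.
Definition wshuffle (a b : word) : seq word := map rev (shr (rev a) (rev b)).

Definition fs_shuffle (p q : fsum) : fsum :=
  flatten [seq flatten [seq [seq (cw1.1 * cw2.1, w) | w <- wshuffle cw1.2 cw2.2]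
                       | cw2 <- q] | cw1 <- p].

Definition shuffle_list (ks : seq nat) : fsum :=
  foldr (fun k p => fs_shuffle (fs_word (zl k)) p) (fs_word [::]) ks.

Fixpoint comps (m n : nat) : seq (seq nat) :=
  match m with
  | 0 => if n == 0%N then [:: [::]] else [::]
  | m'.+1 => flatten [seq [seq j :: l | l <- comps m' (n - j)] | j <- iota 0 n.+1]
  end.

(* b(k; l) = prod_i binom(k_i + l_i - 1, l_i); with truncated subtraction
   'C(0 + l - 1, l) = delta_{l,0}, matching the convention. *)
Definition bcoef (ks ls : seq nat) : nat :=
  \prod_(p <- zip ks ls) 'C(p.1 + p.2 - 1, p.2).

(* Coefficient of t^n in hat-phi(z_k), for an index k. *)
Definition phihat_word (ks : seq nat) (n : nat) : fsum :=
  flatten [seq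
    let kl := take i ks in
    let kr := drop i ks in
    fs_scale ((-1) ^+ sumn kr)
      (fs_shuffle (fs_word (zw kl))
         (flatten [seq fs_scale (bcoef kr l)%:R
                         (fs_word (zw (rev [seq p.1 + p.2 | p <- zip kr l])))
                  | l <- comps (size kr) n]))
  | i <- iota 0 (size ks).+1].

(* Index of a word y x^(a_1) y x^(a_2) ... y x^(a_r) in H^1: (a_1+1,...,a_r+1);
   the empty word has the empty index. (Only meaningful on words of H^1.) *)
Fixpoint idx_aux (acc : nat) (w : word) : seq nat :=
  match w with
  | [::] => [:: acc]
  | b :: w' => if b then acc :: idx_aux 1 w' else idx_aux acc.+1 w'
  end.
Definition idx_of (w : word) : seq nat :=
  match w with [::] => [::] | _ :: w' => idx_aux 1 w' end.

(* Q-linear (hence, on t-free inputs, Q[[t]]-linear) extension of hat-phi;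
   an element of H^1[[t]] is given by its t-coefficients n |-> fsum. *)
Definition phihat (p : fsum) (n : nat) : fsum :=
  flatten [seq fs_scale cw.1 (phihat_word (idx_of cw.2) n) | cw <- p].

From mathcomp Require Import all_boot all_order all_algebra.
From mathcomp Require Import zify ring.
Import Order.TTheory GRing.Theory Num.Theory.
Local Open Scope ring_scope.
Set Implicit Arguments. Unset Strict Implicit. Unset Printing Implicit Defensive.

(* Everything is proved in the dual: a formal sum p is identified with the
   linear form  G |-> <p, G> = sum c * G w  on test functions G : word -> rat,
   and coef p w = <p, [. == w]>.  Dually, the shuffle product becomes the sum
   of G over all shuffles of two words, and the deconcatenation coproduct and
   the "cut at a letter y" operation become sums over factorizations of a word.

   Next, hat-phi(z_k) is
   written as a y-cut of z_k (the sum over l of the binomial-weighted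
   reversed indices becomes a shuffle with x^n).  Finally the y-cuts of
   z_{k_1} ш ... ш z_{k_r} split into one term per removed factor z_{k_i}
   (Leibniz rule), and each term is evaluated with a twisted form of the
   antipode identity, sum_{q = uv} (-1)^|v| u ш x^(c+1) (x^k ш rev v)
   = (q ш x^c) x^(k+1).  This gives the corollary paired with any test
   function, and taking G = [. == w] gives it coefficient by coefficient. *)

Definition pairing (p : fsum) (G : word -> rat) : rat := \sum_(cw <- p) cw.1 * G cw.2.

Lemma coef_pairing p w : coef p w = pairing p (fun v => (v == w)%:R).
Proof.
rewrite /coef /pairing big_mkcond /=; apply: eq_bigr => cw _.
by case: eqP => _; rewrite ?mulr1 ?mulr0.
Qed.

Lemma pairing_nil G : pairing [::] G = 0. Proof. by rewrite /pairing big_nil. Qed.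

Lemma pairing_cat p q G : pairing (p ++ q) G = pairing p G + pairing q G.
Proof. by rewrite /pairing big_cat. Qed.

Lemma pairing_word w G : pairing (fs_word w) G = G w.
Proof. by rewrite /pairing /fs_word big_cons big_nil mul1r addr0. Qed.

Lemma pairing_scale c p G : pairing (fs_scale c p) G = c * pairing p G.
Proof.
rewrite /pairing /fs_scale big_map mulr_sumr.
by apply: eq_bigr => cw _; rewrite mulrA.
Qed.

Lemma pairing_rcat p u G : pairing (fs_rcat p u) G = pairing p (fun w => G (w ++ u)).
Proof. by rewrite /pairing /fs_rcat big_map. Qed.

Lemma pairing_flatten (T : Type) (s : seq T) (f : T -> fsum) G :
  pairing (flatten (map f s)) G = \sum_(x <- s) pairing (f x) G.
Proof.
elim: s => [|x s IH] /=; first by rewrite pairing_nil big_nil.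
by rewrite pairing_cat IH big_cons.
Qed.

Lemma pairing_weighted (T : Type) (s : seq T) (c : T -> rat) (g : T -> word) G :
  pairing (flatten [seq fs_scale (c x) (fs_word (g x)) | x <- s]) G =
  \sum_(x <- s) c x * G (g x).
Proof.
by rewrite pairing_flatten; apply: eq_bigr => x _; rewrite pairing_scale pairing_word.
Qed.

Lemma eq_pairing p G G' : G =1 G' -> pairing p G = pairing p G'.
Proof. by move=> e; apply: eq_bigr => cw _; rewrite e. Qed.

Lemma pairingD p G G' : pairing p (fun w => G w + G' w) = pairing p G + pairing p G'.
Proof. by rewrite /pairing -big_split; apply: eq_bigr => cw _; rewrite mulrDr. Qed.

Lemma pairingZ p c G : pairing p (fun w => c * G w) = c * pairing p G.
Proof. by rewrite /pairing mulr_sumr; apply: eq_bigr => cw _; rewrite mulrCA. Qed.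

Lemma pairing_sum (T : Type) p (s : seq T) (f : T -> word -> rat) :
  pairing p (fun w => \sum_(x <- s) f x w) = \sum_(x <- s) pairing p (f x).
Proof. by rewrite /pairing exchange_big /=; apply: eq_bigr => cw _; rewrite mulr_sumr. Qed.

Lemma pairing0 p : pairing p (fun _ => 0) = 0.
Proof. by rewrite /pairing big1 // => cw _; rewrite mulr0. Qed.

Lemma big_iota_ord (f : nat -> rat) m : \sum_(i <- iota 0 m) f i = \sum_(i < m) f i.
Proof. by rewrite -(big_mkord xpredT) /index_iota subn0. Qed.

Definition shsum (a b : word) (G : word -> rat) : rat := \sum_(w <- shr a b) G w.
Arguments shsum : simpl never.

Lemma shsum_nil_l b G : shsum [::] b G = G b.
Proof. by rewrite /shsum big_cons big_nil addr0. Qed.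

Lemma shsum_nil_r a G : shsum a [::] G = G a.
Proof. by case: a => [|? ?]; rewrite /shsum big_cons big_nil addr0. Qed.

Lemma shsum_cons p a q b G :
  shsum (p :: a) (q :: b) G =
  shsum a (q :: b) (fun w => G (p :: w)) + shsum (p :: a) b (fun w => G (q :: w)).
Proof. by rewrite /shsum /= big_cat !big_map. Qed.

Lemma eq_shsum a b G G' : G =1 G' -> shsum a b G = shsum a b G'.
Proof. by move=> e; apply: eq_bigr => w _; rewrite e. Qed.

Lemma shsumD a b G G' : shsum a b (fun w => G w + G' w) = shsum a b G + shsum a b G'.
Proof. by rewrite /shsum big_split. Qed.

Lemma shsumZ a b c G : shsum a b (fun w => c * G w) = c * shsum a b G.
Proof. by rewrite /shsum mulr_sumr. Qed.

Lemma shsum_sum (T : Type) a b (s : seq T) (f : T -> word -> rat) :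
  shsum a b (fun w => \sum_(x <- s) f x w) = \sum_(x <- s) shsum a b (f x).
Proof. by rewrite /shsum exchange_big. Qed.

Lemma shsum0 a b : shsum a b (fun _ => 0) = 0.
Proof. by rewrite /shsum big1. Qed.

Lemma shsum_pairing a b p (K : word -> word -> rat) :
  shsum a b (fun w => pairing p (K w)) = pairing p (fun v => shsum a b (fun w => K w v)).
Proof.
by rewrite /pairing /shsum exchange_big /=; apply: eq_bigr => cw _; rewrite mulr_sumr.
Qed.

Lemma exchange_shsum a b c d (K : word -> word -> rat) :
  shsum a b (fun w => shsum c d (K w)) = shsum c d (fun v => shsum a b (fun w => K w v)).
Proof. by rewrite /shsum exchange_big. Qed.

Lemma shuffle_ind (P : word -> word -> Prop) :
  (forall b, P [::] b) -> (forall a, P a [::]) ->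
  (forall p a q b, P a (q :: b) -> P (p :: a) b -> P (p :: a) (q :: b)) ->
  forall a b, P a b.
Proof.
move=> Pnil_l Pnil_r Pcons a b.
move: {2}(size a + size b)%N (leqnn (size a + size b)%N) => N.
elim: N a b => [|N IH] [|p a] [|q b] //= hs; try by [apply: Pnil_l | apply: Pnil_r].
by apply: Pcons; apply: IH => /=; lia.
Qed.

Lemma shsumC a b G : shsum a b G = shsum b a G.
Proof.
move: a b G; apply: shuffle_ind => [b|a|p a q b IH1 IH2] G; rewrite ?shsum_nil_l ?shsum_nil_r //.
by rewrite !shsum_cons addrC IH1 IH2.
Qed.

Lemma shsum_rcons a u b v G :
  shsum (rcons a u) (rcons b v) G =
  shsum a (rcons b v) (fun w => G (rcons w u)) + shsum (rcons a u) b (fun w => G (rcons w v)).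
Proof.
have nil_l b' u' v' G' : shsum [:: u'] (rcons b' v') G' =
    G' (rcons (rcons b' v') u') + shsum [:: u'] b' (fun w => G' (rcons w v')).
  elim: b' G' => [|q b' IH] G' /=; first by rewrite shsum_cons !shsum_nil_l !shsum_nil_r addrC.
  rewrite shsum_cons IH shsum_cons !shsum_nil_l addrA [in RHS]addrA; congr (_ + _).
  exact: addrC.
move: a b u v G; apply: shuffle_ind => [b|a|p a q b IH1 IH2] u v G.
- by rewrite shsum_nil_l nil_l.
- by rewrite shsumC nil_l shsum_nil_r shsumC addrC.
rewrite /= shsum_cons -rcons_cons IH1 -rcons_cons IH2 /= !shsum_cons.
rewrite -!addrA; congr (_ + _); rewrite addrCA; congr (_ + _); exact: addrC.
Qed.

Lemma shsum_rev a b G : shsum a b (fun w => G (rev w)) = shsum (rev a) (rev b) G.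
Proof.
move: a b G; apply: shuffle_ind => [b|a|p a q b IH1 IH2] G; rewrite ?shsum_nil_l ?shsum_nil_r //.
have rev_first r w : G (rev (r :: w)) = G (rcons (rev w) r) by rewrite rev_cons.
rewrite shsum_cons !(eq_shsum _ _ (rev_first _)) (IH1 (fun w => G (rcons w p))).
rewrite (IH2 (fun w => G (rcons w q))) [rev (p :: a)]rev_cons.
by rewrite [rev (q :: b)]rev_cons shsum_rcons.
Qed.

Lemma wshuffle_sum a b G : \sum_(w <- wshuffle a b) G w = shsum a b G.
Proof. by rewrite -[a in RHS]revK -[b in RHS]revK -shsum_rev /wshuffle big_map. Qed.

Lemma pairing_shuffle p q G :
  pairing (fs_shuffle p q) G = pairing p (fun a => pairing q (fun b => shsum a b G)).
Proof.
rewrite /pairing /fs_shuffle big_flatten /= big_map; apply: eq_bigr => cw1 _.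
rewrite big_flatten /= big_map mulr_sumr; apply: eq_bigr => cw2 _.
rewrite big_map -wshuffle_sum !mulr_sumr; apply: eq_bigr => w _; by rewrite mulrA.
Qed.

Lemma shsumA a b c G : shsum a b (fun w => shsum w c G) = shsum b c (fun w => shsum a w G).
Proof.
move: {2}(size a + size b + size c)%N (leqnn (size a + size b + size c)%N) => N.
elim: N a b c G => [|N IH] [|p a] [|q b] [|r c] G hs;
  rewrite ?shsum_nil_l ?shsum_nil_r ?shsum_nil_l //;
  try by apply: eq_shsum => w; rewrite ?shsum_nil_l ?shsum_nil_r.
have step_l s w : shsum (s :: w) (r :: c) G =
    shsum w (r :: c) (fun v => G (s :: v)) + shsum (s :: w) c (fun v => G (r :: v)).
  exact: shsum_cons.
have step_r s w : shsum (p :: a) (s :: w) G =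
    shsum a (s :: w) (fun v => G (p :: v)) + shsum (p :: a) w (fun v => G (s :: v)).
  exact: shsum_cons.
have last_letters : shsum a (q :: b) (fun w => shsum (p :: w) c (fun v => G (r :: v))) +
    shsum (p :: a) b (fun w => shsum (q :: w) c (fun v => G (r :: v))) =
    shsum (p :: a) (q :: b) (fun w => shsum w c (fun v => G (r :: v))) by rewrite shsum_cons.
have first_letter : shsum b (r :: c) (fun w => shsum a (q :: w) (fun v => G (p :: v))) +
    shsum (q :: b) c (fun w => shsum a (r :: w) (fun v => G (p :: v))) =
    shsum (q :: b) (r :: c) (fun w => shsum a w (fun v => G (p :: v))) by rewrite shsum_cons.
rewrite shsum_cons (eq_shsum _ _ (step_l p)) (eq_shsum _ _ (step_l q)) !shsumD.
rewrite [RHS]shsum_cons (eq_shsum _ _ (step_r q)) (eq_shsum _ _ (step_r r)) !shsumD.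
rewrite (IH a (q :: b) (r :: c)) in first_letter *; last by move: hs => /=; lia.
rewrite (IH (p :: a) b (r :: c)); last by move: hs => /=; lia.
rewrite (IH (p :: a) (q :: b) c) in last_letters; last by move: hs => /=; lia.
rewrite -first_letter -last_letters; ring.
Qed.

Lemma size_shr a b w : w \in shr a b -> size w = (size a + size b)%N.
Proof.
move: a b w; apply: shuffle_ind => [b|a|p a q b IH1 IH2] w.
- by rewrite inE => /eqP ->.
- by case: a => [|? ?]; rewrite inE addn0 => /eqP ->.
by rewrite /= mem_cat => /orP[] /mapP[v hv ->] /=; [rewrite (IH1 _ hv) | rewrite (IH2 _ hv)] => /=; lia.
Qed.

Lemma shsum_sign a b G :
  shsum a b (fun w => (-1) ^+ size w * G w) = (-1) ^+ (size a + size b) * shsum a b G.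
Proof. by rewrite /shsum mulr_sumr !big_seq; apply: eq_bigr => w /size_shr ->. Qed.

Definition xpow (m : nat) : word := nseq m xL.

Lemma xpowS m : xpow m.+1 = rcons (xpow m) xL.
Proof. by rewrite /xpow -cats1 -[m.+1]addn1 nseqD. Qed.

Lemma rev_xpow m : rev (xpow m) = xpow m.
Proof. by rewrite /xpow rev_nseq. Qed.

Lemma shsum_xpow a b G : shsum (xpow a) (xpow b) G = ('C(a + b, a))%:R * G (xpow (a + b)).
Proof.
elim: a b G => [|a IHa] b G; first by rewrite shsum_nil_l bin0 mul1r.
elim: b G => [|b IHb] G; first by rewrite shsum_nil_r addn0 binn mul1r.
rewrite [xpow a.+1]/= [xpow b.+1]/= shsum_cons (IHa b.+1) (IHb (fun w => G (xL :: w))).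
have -> : (a + b.+1 = a.+1 + b)%N by rewrite addnS.
rewrite -mulrDl -natrD addnC -binS addnS.
by rewrite (_ : xL :: xpow (a.+1 + b) = xpow (a.+1 + b).+1).
Qed.

(* The dual of deconcatenation: the sum of Ps u v over all factorizations w = u v. *)
Fixpoint deconc (w : word) (Ps : word -> word -> rat) : rat :=
  match w with
  | [::] => Ps [::] [::]
  | p :: w' => Ps [::] w + deconc w' (fun u v => Ps (p :: u) v)
  end.

Fixpoint ycut (w : word) (Ps : word -> word -> rat) : rat :=
  match w with
  | [::] => 0
  | p :: w' => (if p then Ps [::] w' else 0) + ycut w' (fun u v => Ps (p :: u) v)
  end.

Lemma eq_deconc w Ps Ps' : (forall u v, Ps u v = Ps' u v) -> deconc w Ps = deconc w Ps'.
Proof.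
elim: w Ps Ps' => [|p w IH] Ps Ps' e /=; first exact: e.
by rewrite e (IH _ (fun u v => Ps' (p :: u) v)).
Qed.

Lemma eq_deconc_short w Ps Ps' :
  (forall u v, (size v <= size w)%N -> Ps u v = Ps' u v) -> deconc w Ps = deconc w Ps'.
Proof.
elim: w Ps Ps' => [|p w IH] Ps Ps' e /=; first exact: e.
by rewrite e // (IH _ (fun u v => Ps' (p :: u) v)) // => u v h; apply: e; exact: leqW.
Qed.

Lemma deconcD w Ps Ps' : deconc w (fun u v => Ps u v + Ps' u v) = deconc w Ps + deconc w Ps'.
Proof.
elim: w Ps Ps' => [|p w IH] Ps Ps' //=.
by rewrite (IH (fun u v => Ps (p :: u) v) (fun u v => Ps' (p :: u) v)); ring.
Qed.

Lemma deconcZ w c Ps : deconc w (fun u v => c * Ps u v) = c * deconc w Ps.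
Proof.
elim: w Ps => [|p w IH] Ps //=.
by rewrite (IH (fun u v => Ps (p :: u) v)) mulrDr.
Qed.

Lemma deconcN w Ps : deconc w (fun u v => - Ps u v) = - deconc w Ps.
Proof. by rewrite -mulN1r -deconcZ; apply: eq_deconc => u v; rewrite mulN1r. Qed.

Lemma deconc0 w : deconc w (fun _ _ => 0) = 0.
Proof. by elim: w => [|p w IH] //=; rewrite IH addr0. Qed.

Lemma deconc_sum (T : Type) w (s : seq T) (f : T -> word -> word -> rat) :
  deconc w (fun u v => \sum_(x <- s) f x u v) = \sum_(x <- s) deconc w (f x).
Proof.
elim: s => [|x s IH].
  rewrite big_nil -[RHS](deconc0 w); apply: eq_deconc => u v; exact: big_nil.
by rewrite big_cons -IH -deconcD; apply: eq_deconc => u v; rewrite big_cons.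
Qed.

Lemma deconc_shsum w a b (K : word -> word -> word -> rat) :
  deconc w (fun u v => shsum a b (K u v)) = shsum a b (fun x => deconc w (fun u v => K u v x)).
Proof. by rewrite /shsum -deconc_sum. Qed.

Lemma deconcA w (K : word -> word -> word -> rat) :
  deconc w (fun u v => deconc u (fun u1 u2 => K u1 u2 v)) =
  deconc w (fun u1 q => deconc q (fun u2 v => K u1 u2 v)).
Proof.
elim: w K => [|p w IH] K //=.
by rewrite deconcD (IH (fun u1 u2 v => K (p :: u1) u2 v)) addrA.
Qed.

Lemma deconc_rcons w q Ps :
  deconc (rcons w q) Ps = Ps (rcons w q) [::] + deconc w (fun u v => Ps u (rcons v q)).
Proof.
elim: w Ps => [|p w IH] Ps /=; first by rewrite addrC.
by rewrite (IH (fun u v => Ps (p :: u) v)); ring.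
Qed.

Lemma deconc_counit w (Phi : word -> rat) : deconc w (fun u v => (v == [::])%:R * Phi u) = Phi w.
Proof.
elim: w Phi => [|p w IH] Phi /=; first by rewrite mul1r.
by rewrite mul0r add0r (IH (fun u => Phi (p :: u))).
Qed.

Lemma shsum_insert u b Z G :
  shsum u (b :: Z) G = deconc u (fun u1 u2 => shsum u2 Z (fun m => G (u1 ++ b :: m))).
Proof.
elim: u G => [|p u IH] G /=; first by rewrite !shsum_nil_l.
by rewrite shsum_cons IH addrC.
Qed.

Lemma antipode w H :
  deconc w (fun u v => (-1) ^+ size v * shsum u (rev v) H) = (w == [::])%:R * H [::].
Proof.
move: {2}(size w) (leqnn (size w)) => N.
elim: N w H => [|N IH] w H.
  by case: w => [|? ?] // _; rewrite /= expr0 !mul1r shsum_nil_l.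
case/lastP: w => [|w q] hs; first by rewrite /= expr0 !mul1r shsum_nil_l.
rewrite deconc_rcons /= shsum_nil_r mul1r.
have -> : deconc w (fun u v => (-1) ^+ size (rcons v q) * shsum u (rev (rcons v q)) H) =
   - deconc w (fun u1 s => deconc s (fun u2 v =>
       (-1) ^+ size v * shsum u2 (rev v) (fun m => H (u1 ++ q :: m)))).
  rewrite -deconcA -deconcN; apply: eq_deconc => u v.
  rewrite rev_rcons size_rcons shsum_insert -deconcZ -deconcN.
  by apply: eq_deconc => u1 u2; rewrite exprS; ring.
rewrite (eq_deconc_short (Ps' := fun u1 s => (s == [::])%:R * H (u1 ++ [:: q]))); last first.
  by move=> u1 s hsz; rewrite IH //; move: hs; rewrite size_rcons; lia.
by rewrite deconc_counit cats1 (_ : rcons w q == [::] = false) ?mul0r ?subrr //; case: (w).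
Qed.

Lemma eq_ycut w Ps Ps' : (forall u v, Ps u v = Ps' u v) -> ycut w Ps = ycut w Ps'.
Proof.
elim: w Ps Ps' => [|p w IH] Ps Ps' e //=.
by rewrite e (IH _ (fun u v => Ps' (p :: u) v)).
Qed.

Lemma ycutD w Ps Ps' : ycut w (fun u v => Ps u v + Ps' u v) = ycut w Ps + ycut w Ps'.
Proof.
elim: w Ps Ps' => [|p w IH] Ps Ps' /=; first by rewrite addr0.
rewrite (IH (fun u v => Ps (p :: u) v) (fun u v => Ps' (p :: u) v)).
by case: p; rewrite ?addr0; ring.
Qed.

Lemma ycut0 w : ycut w (fun _ _ => 0) = 0.
Proof. by elim: w => [|p w IH] //=; rewrite IH addr0; case: p. Qed.

Lemma ycut_sum (T : Type) w (s : seq T) (f : T -> word -> word -> rat) :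
  ycut w (fun u v => \sum_(x <- s) f x u v) = \sum_(x <- s) ycut w (f x).
Proof.
elim: s => [|x s IH].
  rewrite big_nil -[RHS](ycut0 w); apply: eq_ycut => u v; exact: big_nil.
by rewrite big_cons -IH -ycutD; apply: eq_ycut => u v; rewrite big_cons.
Qed.

Lemma ycut_shsum w a b (K : word -> word -> word -> rat) :
  ycut w (fun u v => shsum a b (K u v)) = shsum a b (fun x => ycut w (fun u v => K u v x)).
Proof. by rewrite /shsum -ycut_sum. Qed.

(* Shuffling x^n into P x^k, sorted by the number l of letters of x^n that
   land in the final block, which becomes x^(k + l) in binom(k + l - 1, l) ways. *)
Lemma shsum_xsuffix P k n G :
  shsum (P ++ xpow k) (xpow n) G =
  \sum_(l < n.+1) ('C(k + l - 1, l))%:R *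
     shsum P (xpow (n - l)) (fun m => G (m ++ xpow (k + l))).
Proof.
elim: k n G => [|k IHk] n G.
  rewrite cats0 big_ord_recl /= add0n bin0 mul1r subn0.
  rewrite big1 ?addr0; last by move=> i _; rewrite add0n /= subn1 /= bin_small // mul0r.
  by apply: eq_shsum => m; rewrite cats0.
elim: n G => [|n IHn] G.
  by rewrite big_ord_recl big_ord0 addr0 /= addn0 subn1 /= bin0 mul1r !shsum_nil_r addn0.
rewrite xpowS -rcons_cat [xpow n.+1]xpowS shsum_rcons -xpowS rcons_cat -xpowS.
rewrite (IHk n.+1) (IHn (fun w => G (rcons w xL))).
have grow m l : rcons (m ++ xpow (k + l)) xL = m ++ xpow (k.+1 + l).
  by rewrite rcons_cat -xpowS addSn.
have grow' m l : rcons (m ++ xpow (k.+1 + l)) xL = m ++ xpow (k.+1 + l.+1).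
  by rewrite rcons_cat -xpowS addnS.
under eq_bigr => i _ do rewrite (eq_shsum _ _ (fun m => congr1 G (grow m i))).
under [X in _ + X = _]eq_bigr => i _ do rewrite (eq_shsum _ _ (fun m => congr1 G (grow' m i))).
rewrite [in LHS]big_ord_recl [in RHS]big_ord_recl addn0 addSn /= !bin0 -addrA.
congr (_ + _); rewrite -big_split /=; apply: eq_bigr => i _.
rewrite /bump /= add1n subSS.
have -> : (k + i.+1 - 1 = k + i)%N by lia.
have -> : (k.+1 + i - 1 = k + i)%N by lia.
have -> : (k.+1 + i.+1 - 1 = (k + i).+1)%N by lia.
by rewrite binS natrD mulrDl.
Qed.

(* Shuffling x^n into x^m y W, sorted by the number j of letters of x^n that
   land before the y: the initial block becomes x^(m + j) in binom(m + j, j) ways. *)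
Lemma shsum_xprefix m W n G :
  shsum (xpow m ++ yL :: W) (xpow n) G =
  \sum_(j < n.+1) ('C(m + j, j))%:R *
     shsum W (xpow (n - j)) (fun w => G (xpow (m + j) ++ yL :: w)).
Proof.
elim: m n G => [|m IHm] n G.
  elim: n G => [|n IHn] G.
    by rewrite big_ord_recl big_ord0 addr0 shsum_nil_r /= bin0 mul1r shsum_nil_r.
  rewrite -[xpow 0 ++ _]/(yL :: W) -[xpow n.+1]/(xL :: xpow n) shsum_cons.
  rewrite -[yL :: W]/(xpow 0 ++ yL :: W) IHn [in RHS]big_ord_recl subn0 add0n bin0 mul1r.
  by congr (_ + _); apply: eq_bigr => j _; rewrite lift0 subSS !add0n !binn.
elim: n G => [|n IHn] G.
  by rewrite big_ord_recl big_ord0 addr0 shsum_nil_r /= bin0 mul1r shsum_nil_r addn0.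
rewrite -[xpow m.+1 ++ _]/(xL :: (xpow m ++ yL :: W)) -[xpow n.+1]/(xL :: xpow n) shsum_cons.
rewrite -[xL :: (xpow m ++ yL :: W)]/(xpow m.+1 ++ yL :: W) IHn -[xL :: xpow n]/(xpow n.+1) IHm.
rewrite big_ord_recl [in RHS]big_ord_recl !addn0 !bin0 !subn0 -addrA; congr (_ + _).
rewrite -big_split /=; apply: eq_bigr => j _.
rewrite /bump /= add1n subSS.
have -> : (m.+1 + j.+1 = (m + j.+1).+1)%N by lia.
rewrite binS natrD mulrDl; congr (_ + _).
have -> : (m.+1 + j = m + j.+1)%N by lia.
by rewrite !addnS.
Qed.

(* The dual of sum_{q = u v} (-1)^|v| u ш x^c (x^k ш rev v), a twisted form of
   the antipode sum; [antipode_xpow] evaluates it. *)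
Definition twisted_antipode (k c : nat) (q : word) (H : word -> rat) : rat :=
  deconc q (fun u v =>
    (-1) ^+ size v * shsum (xpow k) (rev v) (fun W => shsum u (xpow c ++ W) H)).

(* For c = 0 it is the antipode identity applied to . ш x^k. *)
Lemma twisted_antipode0 k q H :
  twisted_antipode k 0 q H = (q == [::])%:R * shsum [::] (xpow k) H.
Proof.
rewrite /twisted_antipode -(antipode q (fun w => shsum w (xpow k) H)).
by apply: eq_deconc => u v; rewrite shsumC shsumA.
Qed.

(* Peeling off the first x of x^(c + 1) by inserting it into u. *)
Lemma twisted_antipodeS k c q H :
  twisted_antipode k c.+1 q H =
  deconc q (fun p1 r => twisted_antipode k c r (fun m => H (p1 ++ xL :: m))).
Proof.
rewrite /twisted_antipode -deconcA; apply: eq_deconc => u v.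
rewrite deconcZ deconc_shsum; congr (_ * _); apply: eq_shsum => W.
exact: shsum_insert.
Qed.

Lemma antipode_xpow k c q H :
  twisted_antipode k c.+1 q H = shsum q (xpow c) (fun P => H (P ++ xpow k.+1)).
Proof.
elim: c q H => [|c IH] q H.
  rewrite twisted_antipodeS shsum_nil_r -[RHS](deconc_counit q (fun p1 => H (p1 ++ xL :: xpow k))).
  by apply: eq_deconc => p1 r; rewrite twisted_antipode0 shsum_nil_l.
rewrite twisted_antipodeS [xpow c.+1]/= shsum_insert; apply: eq_deconc => p1 r.
by rewrite IH; apply: eq_shsum => m; rewrite -catA.
Qed.

(* Dual of (Delta a) ш (Delta b) in H (x) H. *)
Definition deconc_deconc (a b : word) (Ps : word -> word -> rat) : rat :=
  deconc a (fun a1 a2 => deconc b (fun b1 b2 =>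
    shsum a1 b1 (fun w1 => shsum a2 b2 (Ps w1)))).

Lemma deconc_deconc_cons p a q b Ps :
  deconc_deconc (p :: a) (q :: b) Ps =
  shsum (p :: a) (q :: b) (Ps [::]) + deconc_deconc a (q :: b) (fun w => Ps (p :: w)) +
  deconc_deconc (p :: a) b (fun w => Ps (q :: w)).
Proof.
rewrite /deconc_deconc /= !shsum_nil_l -!addrA; congr (_ + _); rewrite addrCA; congr (_ + _).
  by apply: eq_deconc => u v; rewrite !shsum_nil_l.
rewrite -deconcD; apply: eq_deconc => u v; rewrite !shsum_nil_r -addrA -deconcD; congr (_ + _).
by apply: eq_deconc => u0 v0; rewrite shsum_cons.
Qed.

(* Deconcatenation is a morphism for the shuffle product. *)
Lemma shsum_deconc a b Ps : shsum a b (fun W => deconc W Ps) = deconc_deconc a b Ps.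
Proof.
move: a b Ps; apply: shuffle_ind => [b|a|p a q b IH1 IH2] Ps; rewrite /deconc_deconc.
- by rewrite shsum_nil_l; apply: eq_deconc => b1 b2; rewrite !shsum_nil_l.
- by rewrite shsum_nil_r; apply: eq_deconc => a1 a2; rewrite /= !shsum_nil_r.
rewrite -/(deconc_deconc _ _ _) deconc_deconc_cons -IH1 -IH2 shsum_cons /= !shsumD.
by rewrite [shsum (p :: a) (q :: b) _]shsum_cons; ring.
Qed.

(* Dual of (Delta a) ш (cut of b at a letter y), in H (x) H. *)
Definition deconc_ycut (a b : word) (Ps : word -> word -> rat) : rat :=
  deconc a (fun a1 a2 => ycut b (fun b1 b2 =>
    shsum a1 b1 (fun w1 => shsum a2 b2 (Ps w1)))).

Lemma deconc_ycut_cons p a q b Ps :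
  deconc_ycut (p :: a) (q :: b) Ps =
  (if q then shsum (p :: a) b (Ps [::]) else 0) +
  deconc_ycut a (q :: b) (fun w => Ps (p :: w)) + deconc_ycut (p :: a) b (fun w => Ps (q :: w)).
Proof.
rewrite /deconc_ycut /= !shsum_nil_l -!addrA; congr (_ + _); rewrite addrCA; congr (_ + _).
  by apply: eq_ycut => u v; rewrite !shsum_nil_l.
rewrite -deconcD; apply: eq_deconc => u v; rewrite !shsum_nil_r -addrA -ycutD; congr (_ + _).
by apply: eq_ycut => u0 v0; rewrite shsum_cons.
Qed.

(* Cutting at a letter y is a derivation for the shuffle product (Leibniz rule). *)
Lemma shsum_ycut a b Ps :
  shsum a b (fun W => ycut W Ps) = deconc_ycut a b Ps + deconc_ycut b a Ps.
Proof.
have shsum_if a' b' (c : bool) G :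
    shsum a' b' (fun W => if c then G W else 0) = if c then shsum a' b' G else 0.
  by case: c; rewrite ?shsum0.
move: a b Ps; apply: shuffle_ind => [b|a|p a q b IH1 IH2] Ps.
- rewrite shsum_nil_l /deconc_ycut /= deconc0 addr0.
  by apply: eq_ycut => b1 b2; rewrite !shsum_nil_l.
- rewrite shsum_nil_r /deconc_ycut /= deconc0 add0r.
  by apply: eq_ycut => a1 a2; rewrite !shsum_nil_l ?shsum_nil_r.
rewrite !deconc_ycut_cons shsum_cons /= !shsumD !shsum_if IH1 IH2.
by rewrite [shsum (q :: b) a _]shsumC; ring.
Qed.

(* z_k = y x^(k-1) has a single letter y. *)
Lemma ycut_xpow m Ps : ycut (xpow m) Ps = 0.
Proof. by elim: m Ps => [|m IH] Ps //=; rewrite IH addr0. Qed.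

Lemma ycut_zl k Ps : ycut (zl k) Ps = Ps [::] (xpow k.-1).
Proof. by rewrite /= ycut_xpow addr0. Qed.

Lemma shsum_reassoc2 a1 a2 z1 z2 b1 b2 Ps :
  shsum z1 b1 (fun L => shsum z2 b2 (fun R => shsum a1 L (fun w1 => shsum a2 R (Ps w1)))) =
  shsum a1 z1 (fun c1 => shsum a2 z2 (fun c2 => shsum c1 b1 (fun w1 => shsum c2 b2 (Ps w1)))).
Proof.
have right_factor w1 : shsum z2 b2 (fun R => shsum a2 R (Ps w1)) =
    shsum a2 z2 (fun c2 => shsum c2 b2 (Ps w1)) by rewrite shsumA.
rewrite (eq_shsum _ _ (fun L => exchange_shsum _ _ _ _ _)).
rewrite (eq_shsum _ _ (fun L => eq_shsum _ _ right_factor)) -shsumA.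
by apply: eq_shsum => c1; rewrite exchange_shsum.
Qed.

(* The Leibniz rule for the factor z_k: the y of z_k is cut and the rest of
   z_k shuffles into the right part, or a y of b is cut and z_k shuffles
   into the left factor. *)
Lemma shsum_zl_deconc_ycut k a b Ps :
  shsum (zl k) b (fun W => deconc_ycut a W Ps) =
  shsum a b (fun B => deconc B (fun u v => shsum (xpow k.-1) v (Ps u))) +
  shsum a (zl k) (fun a' => deconc_ycut a' b Ps).
Proof.
rewrite /deconc_ycut -deconc_shsum.
under eq_deconc => a1 a2 do rewrite shsum_ycut.
rewrite deconcD addrC !shsum_deconc /deconc_deconc; congr (_ + _).
  apply: eq_deconc => a1 a2; apply: eq_deconc => b1 b2.
  rewrite /deconc_ycut ycut_zl shsum_nil_r exchange_shsum; apply: eq_shsum => w1.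
  by rewrite -shsumA; apply: eq_shsum => v; rewrite shsumC.
apply: eq_deconc => a1 a2; rewrite /deconc_ycut; apply: eq_deconc => z1 z2.
rewrite (eq_ycut _ (fun b1 b2 => shsum_reassoc2 a1 a2 z1 z2 b1 b2 Ps)).
by rewrite ycut_shsum; apply: eq_shsum => c1; rewrite ycut_shsum.
Qed.

Lemma pairing_shuffle_list_cons k ks G :
  pairing (shuffle_list (k :: ks)) G = pairing (shuffle_list ks) (fun b => shsum (zl k) b G).
Proof. by rewrite /= pairing_shuffle pairing_word. Qed.

(* Cutting z_{k_1} ш ... ш z_{k_r} at a letter y, against the deconcatenation
   of alpha: each term removes one factor z_{k_i}, whose tail x^(k_i - 1)
   is shuffled into the right part. *)
Lemma ycut_shuffle_list ks alpha Ps :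
  pairing alpha (fun a => pairing (shuffle_list ks) (fun W => deconc_ycut a W Ps)) =
  \sum_(i < size ks) pairing alpha (fun a =>
     pairing (shuffle_list (take i ks ++ drop i.+1 ks)) (fun b =>
       shsum a b (fun B => deconc B (fun u v => shsum (xpow (nth 0%N ks i).-1) v (Ps u))))).
Proof.
elim: ks alpha => [|k ks IH] alpha.
  rewrite big_ord0 /= -[RHS](pairing0 alpha); apply: eq_pairing => a.
  by rewrite pairing_word /deconc_ycut /= deconc0.
rewrite big_ord_recl.
under eq_pairing => a do
  rewrite pairing_shuffle_list_cons (eq_pairing _ (fun b => shsum_zl_deconc_ycut k a b Ps)) pairingD.
rewrite pairingD; congr (_ + _).
  rewrite (_ : take _ (k :: ks) ++ drop _ (k :: ks) = ks) //.
  by rewrite (_ : nat_of_ord (@ord0 (size ks)) = 0%N) // take0 drop1.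
have -> : pairing alpha (fun a => pairing (shuffle_list ks) (fun b => shsum a (zl k)
            (fun a' => deconc_ycut a' b Ps))) =
    pairing (fs_shuffle alpha (fs_word (zl k))) (fun a' =>
      pairing (shuffle_list ks) (fun b => deconc_ycut a' b Ps)).
  by rewrite pairing_shuffle; apply: eq_pairing => a; rewrite pairing_word shsum_pairing.
rewrite IH; apply: eq_bigr => i _.
rewrite pairing_shuffle; apply: eq_pairing => a; rewrite pairing_word.
rewrite pairing_shuffle_list_cons shsum_pairing; apply: eq_pairing => b'.
by rewrite shsumA.
Qed.

Lemma zw_cat s1 s2 : zw (s1 ++ s2) = zw s1 ++ zw s2.
Proof. by rewrite /zw map_cat flatten_cat. Qed.

Lemma zw_rev_cons k s : zw (rev (k :: s)) = zw (rev s) ++ zl k.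
Proof. by rewrite rev_cons -cats1 zw_cat /zw /= cats0. Qed.

Lemma size_zw ks : all (fun k => 0 < k)%N ks -> size (zw ks) = sumn ks.
Proof.
elim: ks => [|k ks IH] //= /andP[kpos hpos].
by rewrite size_cat /= size_nseq IH // -addSn prednK.
Qed.

Lemma ycut_xpow_cat m w Ps : ycut (xpow m ++ w) Ps = ycut w (fun u v => Ps (xpow m ++ u) v).
Proof. by elim: m Ps => [|m IH] Ps //=; rewrite add0r IH. Qed.

Lemma ycut_cat_xpow w c Ps : ycut (w ++ xpow c) Ps = ycut w (fun u v => Ps u (v ++ xpow c)).
Proof. by elim: w Ps => [|p w IH] Ps /=; rewrite ?ycut_xpow ?IH. Qed.

(* The y's of z_{k_1} ... z_{k_r} are exactly the initial letters of its factors. *)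
Lemma ycut_zw ks Ps :
  ycut (zw ks) Ps = \sum_(i < size ks) Ps (zw (take i ks)) (behead (zw (drop i ks))).
Proof.
elim: ks Ps => [|k ks IH] Ps; first by rewrite big_ord0.
by rewrite big_ord_recl /= ycut_xpow_cat IH.
Qed.

Lemma sum_comps_S m n (f : seq nat -> rat) :
  \sum_(l <- comps m.+1 n) f l = \sum_(j < n.+1) \sum_(l <- comps m (n - j)) f ((j : nat) :: l).
Proof.
have -> : comps m.+1 n =
  flatten [seq [seq j :: l | l <- comps m (n - j)] | j <- index_iota 0 n.+1] by [].
rewrite big_flatten big_map big_mkord.
by apply: eq_bigr => j _; rewrite big_map.
Qed.

Lemma sum_comps_1 n (f : seq nat -> rat) : \sum_(l <- comps 1 n) f l = f [:: n].
Proof.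
rewrite sum_comps_S big_ord_recr /= subnn big_cons big_nil addr0 big1 ?add0r // => j _.
by rewrite (negbTE (_ : n - j != 0)%N) ?big_nil // subn_eq0 -ltnNge ltn_ord.
Qed.

Lemma bcoef_cons k ks j ls : bcoef (k :: ks) (j :: ls) = ('C(k + j - 1, j) * bcoef ks ls)%N.
Proof. by rewrite /bcoef /= big_cons. Qed.

(* The binomially weighted sum of z_{rev(k + l)} over the l of weight n is
   y (rev v ш x^n), where z_k = y v: the weights b(k; l) count how the x's
   of x^n are distributed over the blocks of rev v. *)
Lemma sum_shifted_indices kr n G : kr != [::] -> all (fun k => 0 < k)%N kr ->
  \sum_(l <- comps (size kr) n) (bcoef kr l)%:R * G (zw (rev [seq p.1 + p.2 | p <- zip kr l])) =
  shsum (rev (behead (zw kr))) (xpow n) (fun a => G (yL :: a)).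
Proof.
have rev_shsum v m H : shsum (rev v) (xpow m) H = shsum v (xpow m) (fun w => H (rev w)).
  by rewrite shsum_rev rev_xpow.
elim: kr n G => [|k kr IH] n G // _ /andP[kpos hpos].
case: kr IH hpos => [|k2 kr] IH hpos.
  rewrite /= sum_comps_1 /bcoef /= big_cons big_nil muln1 cats0 -/(xpow k.-1).
  rewrite rev_xpow shsum_xpow /zw /= cats0 /zl.
  have -> : ((k + n).-1 = k.-1 + n)%N by lia.
  have -> : (k + n - 1 = k.-1 + n)%N by lia.
  by have := bin_sub (leq_addl k.-1 n); rewrite addnK => ->.
rewrite [size _]/= sum_comps_S.
under eq_bigr => j _.
  rewrite (eq_bigr (fun l => 'C(k + j - 1, j)%:R *
     ((bcoef (k2 :: kr) l)%:R * G (zw (rev [seq p.1 + p.2 | p <- zip (k2 :: kr) l])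
                                   ++ zl (k + j))))); last first.
    by move=> l _; rewrite bcoef_cons natrM -mulrA [zip _ _]/= [map _ _]/= zw_rev_cons.
  rewrite -mulr_sumr (IH (n - j)%N (fun w => G (w ++ zl (k + j)))) //.
  over.
rewrite [behead _]/= rev_shsum shsum_xprefix; apply: eq_bigr => j _.
rewrite rev_shsum.
have -> : (k + j - 1 = k.-1 + j)%N by lia.
congr (_ * _); apply: eq_shsum => w.
rewrite rev_cat /= rev_cons rev_xpow /zl.
have -> : ((k + j).-1 = k.-1 + j)%N by lia.
by rewrite -cats1 -catA.
Qed.

(* The term of hat-phi(z_k) for the cut z_k = u y v: up to the sign
   (-1)^(|v| + 1) it is u ш y (rev v ш x^n), the coefficient of t^n. *)
Definition phihat_form (n : nat) (F : word -> rat) (u v : word) : rat :=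
  (-1) ^+ (size v).+1 * shsum (rev v) (xpow n) (fun a => shsum u (yL :: a) F).

Lemma pairing_phihat_word ks n F : all (fun k => 0 < k)%N ks ->
  pairing (phihat_word ks n) F = (n == 0%N)%:R * F (zw ks) + ycut (zw ks) (phihat_form n F).
Proof.
move=> hpos; rewrite /phihat_word pairing_flatten big_iota_ord big_ord_recr [RHS]addrC; congr (_ + _); last first.
  rewrite take_size drop_size pairing_scale expr0 mul1r pairing_shuffle pairing_word.
  case: n => [|n]; last by rewrite pairing_nil mul0r.
  rewrite pairing_weighted big_cons big_nil addr0 /bcoef big_nil mul1r.
  by rewrite (_ : zw (rev _) = [::]) // shsum_nil_r eqxx mul1r.
rewrite ycut_zw; apply: eq_bigr => i _.
rewrite pairing_scale pairing_shuffle pairing_word pairing_weighted.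
have hne : drop i ks != [::] by rewrite -size_eq0 size_drop subn_eq0 -ltnNge ltn_ord.
have hpos_i : all (fun k => 0 < k)%N (drop i ks).
  by apply/allP => k hk; apply: (allP hpos); exact: mem_drop hk.
rewrite (sum_shifted_indices n (fun w => shsum (zw (take i ks)) w F) hne hpos_i) /phihat_form.
congr (_ * _); move: hne hpos_i; case: (drop i ks) => [|k kr] // _ hp.
by rewrite -size_zw.
Qed.

Lemma shsum_phihat_form k c n F u v :
  shsum (xpow k) v (fun W => phihat_form n F u (W ++ xpow c)) =
  (-1) ^+ (k + c.+1) * ((-1) ^+ size v *
    shsum (xpow k) (rev v) (fun W => shsum (xpow c ++ W) (xpow n) (fun a => shsum u (yL :: a) F))).
Proof.
rewrite /phihat_form (eq_shsum _ _ (G' := fun W => (-1) ^+ size W * ((-1) ^+ c.+1 *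
    shsum (xpow c ++ rev W) (xpow n) (fun a => shsum u (yL :: a) F)))); last first.
  move=> W; rewrite size_cat rev_cat rev_xpow size_nseq.
  by rewrite -addnS exprD mulrA.
rewrite shsum_sign shsumZ.
rewrite (shsum_rev (xpow k) v (fun W => shsum (xpow c ++ W) (xpow n) (fun a => shsum u (yL :: a) F))).
by rewrite rev_xpow size_nseq !exprD; ring.
Qed.

Lemma twisted_antipode_shsum_xpow k c n q G :
  deconc q (fun u v => (-1) ^+ size v * shsum (xpow k) (rev v)
      (fun W => shsum u (xpow c.+1 ++ W) (fun w => shsum w (xpow n) G))) =
  \sum_(l < n.+1) ('C(k.+1 + l - 1, l) * 'C(c.+1 + (n - l) - 1, n - l))%:R *
     shsum q (xpow (c + (n - l))) (fun m => G (m ++ xpow (k.+1 + l))).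
Proof.
have := antipode_xpow k c q (fun w => shsum w (xpow n) G); rewrite /twisted_antipode => ->.
rewrite (eq_shsum _ _ (fun P => shsum_xsuffix P k.+1 n G)) shsum_sum.
apply: eq_bigr => l _; rewrite shsumZ natrM -mulrA shsumA shsum_xpow; congr (_ * (_ * _)).
by rewrite addSn subn1 /=; have := bin_sub (leq_addl c (n - l)); rewrite addnK => ->.
Qed.

(* The contribution of one removed factor z_(k+1), for the final block
   x^(c+1): the deconcatenation sum collapses by the twisted antipode. *)
Lemma deconc_phihat_form B k c n F :
  deconc B (fun u v => shsum (xpow k) v (fun W => phihat_form n F u (W ++ xpow c.+1))) =
  (-1) ^+ (k.+1 + c.+1) * \sum_(l < n.+1)
     ('C(k.+1 + l - 1, l) * 'C(c.+1 + (n - l) - 1, n - l))%:R *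
     shsum B (yL :: xpow (c + (n - l))) (fun b => F (b ++ xpow (k.+1 + l))).
Proof.
under eq_deconc => u v do rewrite shsum_phihat_form.
rewrite deconcZ -addSnnS; congr (_ * _).
have split_u u v : (-1) ^+ size v * shsum (xpow k) (rev v)
      (fun W => shsum (xpow c.+1 ++ W) (xpow n) (fun a => shsum u (yL :: a) F)) =
    deconc u (fun u1 u2 => (-1) ^+ size v * shsum (xpow k) (rev v)
      (fun W => shsum u2 (xpow c.+1 ++ W) (fun w => shsum w (xpow n) (fun m => F (u1 ++ yL :: m))))).
  rewrite deconcZ deconc_shsum; congr (_ * _); apply: eq_shsum => W.
  rewrite (eq_shsum _ _ (fun a => shsum_insert u yL a F)) -deconc_shsum.
  by apply: eq_deconc => u1 u2; rewrite shsumA.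
rewrite (eq_deconc _ split_u) deconcA.
under eq_deconc => u1 q do rewrite twisted_antipode_shsum_xpow.
rewrite deconc_sum; apply: eq_bigr => l _; rewrite deconcZ shsum_insert; congr (_ * _).
by apply: eq_deconc => u1 u2; apply: eq_shsum => m; rewrite -catA.
Qed.

Lemma pairing_phihat p n F :
  pairing (phihat p n) F = pairing p (fun w => pairing (phihat_word (idx_of w) n) F).
Proof.
by rewrite /phihat pairing_flatten; apply: eq_bigr => cw _; rewrite pairing_scale.
Qed.

Lemma zw_idx_aux w acc : (0 < acc)%N -> zw (idx_aux acc w) = yL :: xpow acc.-1 ++ w.
Proof.
elim: w acc => [|b w IH] acc hacc /=; first by rewrite /zw /= cats0.
case: b; first by rewrite /zw /= -/(zw _) IH.
by rewrite IH //= -cat_rcons -xpowS prednK.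
Qed.

Lemma idx_aux_pos w acc : (0 < acc)%N -> all (fun k => 0 < k)%N (idx_aux acc w).
Proof.
elim: w acc => [|b w IH] acc hacc /=; first by rewrite hacc.
by case: b; rewrite /= ?hacc IH.
Qed.

Lemma pairing_phihat_y w n F :
  pairing (phihat_word (idx_of (yL :: w)) n) F =
  (n == 0%N)%:R * F (yL :: w) + ycut (yL :: w) (phihat_form n F).
Proof. by rewrite pairing_phihat_word ?idx_aux_pos // zw_idx_aux. Qed.

(* Every word in z_{k_1} ш ... ш z_{k_r} (r >= 1) starts with y. *)
Lemma pairing_shuffle_list_y ks Phi Phi' : ks != [::] ->
  (forall w, Phi (yL :: w) = Phi' (yL :: w)) ->
  pairing (shuffle_list ks) Phi = pairing (shuffle_list ks) Phi'.
Proof.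
elim: ks Phi Phi' => [|k ks IH] // Phi Phi' _ e.
rewrite !pairing_shuffle_list_cons.
case: ks IH => [|k2 ks] IH; first by rewrite /= !pairing_word !shsum_nil_r e.
apply: IH => // w; rewrite /zl !shsum_cons.
by congr (_ + _); apply: eq_shsum => v; rewrite e.
Qed.

Lemma pairing_shuffle_list_rcons ks k G :
  pairing (shuffle_list (rcons ks k)) G = pairing (shuffle_list ks) (fun b => shsum b (zl k) G).
Proof.
elim: ks G => [|k' ks IH] G; first by rewrite /= pairing_shuffle !pairing_word shsum_nil_r shsum_nil_l.
by rewrite rcons_cons !pairing_shuffle_list_cons IH; apply: eq_pairing => b; rewrite shsumA.
Qed.

Lemma deconc_ycut_nil W Ps : deconc_ycut [::] W Ps = ycut W Ps.
Proof. by rewrite /deconc_ycut /=; apply: eq_ycut => u v; rewrite !shsum_nil_l. Qed.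

Lemma pairing_phihat_shuffle_xpow ks c n F :
  ks != [::] -> all (fun k => 0 < k)%N ks -> (0 < c)%N ->
  pairing (phihat (fs_rcat (shuffle_list ks) (nseq c xL)) n) F =
  pairing ((if n == 0%N then fs_rcat (shuffle_list ks) (nseq c xL) else [::])
          ++ flatten [seq
               fs_scale ((-1) ^+ (nth 0%N ks i + c))
                 (flatten [seq
                    fs_scale ('C(nth 0%N ks i + l - 1, l) * 'C(c + (n - l) - 1, n - l))%:R
                      (fs_rcat (shuffle_list (take i ks ++ drop i.+1 ks ++ [:: (c + (n - l))%N]))
                               (nseq (nth 0%N ks i + l) xL))
                  | l <- iota 0 n.+1])
             | i <- iota 0 (size ks)]) F.
Proof.
move=> hne hpos hc; set Ps := fun u v => phihat_form n F u (v ++ xpow c).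
rewrite pairing_phihat pairing_rcat.
rewrite (pairing_shuffle_list_y (Phi' := fun W => (n == 0%N)%:R * F (W ++ xpow c) + ycut W Ps) hne);
  last by move=> W; rewrite cat_cons pairing_phihat_y -cat_cons ycut_cat_xpow.
rewrite pairingD pairingZ pairing_cat; congr (_ + _).
  by case: (n == 0%N); rewrite ?pairing_rcat ?mul1r ?pairing_nil ?mul0r.
have -> : pairing (shuffle_list ks) (fun W => ycut W Ps) =
    pairing (fs_word [::]) (fun a => pairing (shuffle_list ks) (fun W => deconc_ycut a W Ps)).
  by rewrite pairing_word; apply: eq_pairing => W; rewrite deconc_ycut_nil.
rewrite ycut_shuffle_list pairing_flatten big_iota_ord; apply: eq_bigr => i _.
have hki : (0 < nth 0%N ks i)%N by apply: (allP hpos); rewrite mem_nth.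
rewrite pairing_word (@eq_pairing _ _ (fun B => deconc B (fun u v =>
    shsum (xpow (nth 0%N ks i).-1) v (fun W => phihat_form n F u (W ++ xpow c.-1.+1)))));
  last by move=> B; rewrite shsum_nil_l prednK.
under eq_pairing => B do rewrite deconc_phihat_form.
rewrite pairingZ pairing_scale !prednK //; congr (_ * _).
rewrite pairing_sum pairing_flatten big_iota_ord; apply: eq_bigr => l _.
rewrite pairingZ pairing_scale pairing_rcat catA cats1 pairing_shuffle_list_rcons; congr (_ * _).
by apply: eq_pairing => B; rewrite /zl (_ : (c + (n - l)).-1 = c.-1 + (n - l))%N //; lia.
Qed.

(* ks = (k_1,...,k_r), kr1 = k_{r+1}; the identity is compared coefficient
   of t^n by coefficient of t^n, word by word. *)
Theorem corollary3p7 (r : nat) (ks : seq nat) (kr1 : nat) :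
  (1 <= r)%N -> size ks = r -> all (fun k => 0 < k)%N ks -> (0 < kr1)%N ->
  forall (n : nat) (w : word),
    coef (phihat (fs_rcat (shuffle_list ks) (nseq kr1 xL)) n) w =
    coef ((if n == 0%N then fs_rcat (shuffle_list ks) (nseq kr1 xL) else [::])
          ++ flatten [seq
               fs_scale ((-1) ^+ (nth 0%N ks i + kr1))
                 (flatten [seq
                    fs_scale ('C(nth 0%N ks i + l - 1, l)
                              * 'C(kr1 + (n - l) - 1, n - l))%:R
                      (fs_rcat (shuffle_list (take i ks ++ drop i.+1 ks
                                               ++ [:: (kr1 + (n - l))%N]))
                               (nseq (nth 0%N ks i + l) xL))
                  | l <- iota 0 n.+1])
             | i <- iota 0 r]) w.
Proof.
move=> r_pos size_ks ks_pos kr1_pos n w.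
have ks_nonempty : ks != [::] by rewrite -size_eq0 size_ks -lt0n.
by rewrite !coef_pairing -size_ks; apply: pairing_phihat_shuffle_xpow.
Qed.
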